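(* Let $\mathcal{H}$ be a Hilbert space and let $\mathbf{L}_1,\mathbf{L}_2:\mathcal{H}^n\to\mathcal{H}^n$ be invertible and lower triangular $n\times n$ matrices of operators on $\mathcal{H}$. If $$\mathbf{L}_1\mathbf{L}_1^*=\mathbf{L}_2\mathbf{L}_2^*,$$ then $\mathbf{L}_2=\mathbf{L}_1\,\mathrm{diag}(\mathbf{L}_1)^{-1}\,\mathrm{diag}(\mathbf{L}_2)$.
   Context: For an $n\times n$ matrix of operators $\mathbf{L}$, $\mathrm{diag}(\mathbf{L})$ denotes the diagonal matrix of operators with the same diagonal entries as $\mathbf{L}$; $^*$ denotes the Hilbert space adjoint. *)

From HB Require Import structures.
From mathcomp Require Import all_boot all_order all_algebra.
From mathcomp Require Import reals.
From mathcomp Require Import complex.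
From Stdlib Require Import ClassicalEpsilon.
Set Implicit Arguments. Unset Strict Implicit. Unset Printing Implicit Defensive.
Import Order.TTheory GRing.Theory Num.Theory.
Local Open Scope ring_scope.
Local Open Scope complex_scope.

Section Hilbert.
Variable R : realType.
Variable H : lmodType R[i].
Variable ip : H -> H -> R[i].

Definition is_inner_product : Prop :=
  [/\ forall (a : R[i]) (x y z : H), ip (a *: x + y) z = a * ip x z + ip y z,
      forall x y : H, ip y x = (ip x y)^*,
      forall x : H, 0 <= ip x x
    & forall x : H, ip x x = 0 -> x = 0].

Definition ip_complete : Prop :=
  forall u : nat -> H,
    (forall e : R, 0 < e -> exists N : nat, forall m k : nat, (N <= m)%N -> (N <= k)%N ->
        `|ip (u m - u k) (u m - u k)| < e%:C) ->
    exists l : H, forall e : R, 0 < e -> exists N : nat, forall m : nat, (N <= m)%N ->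
        `|ip (u m - l) (u m - l)| < e%:C.

Definition is_hilbert : Prop := is_inner_product /\ ip_complete.

Definition bounded_op (A : H -> H) : Prop :=
  (forall (a : R[i]) (x y : H), A (a *: x + y) = a *: A x + A y) /\
  exists M : R, forall x : H, `|ip (A x) (A x)| <= M%:C * `|ip x x|.

Definition adjoint (A : H -> H) : H -> H :=
  epsilon (inhabits id) (fun B : H -> H => forall x y : H, ip (A x) y = ip x (B y)).

Definition opmx (n : nat) := 'I_n -> 'I_n -> H -> H.

Definition opmx_mul n (A B : opmx n) : opmx n :=
  fun i j x => \sum_(k < n) A i k (B k j x).

Definition opmx_id n : opmx n := fun i j x => if i == j then x else 0.

Definition opmx_adj n (A : opmx n) : opmx n := fun i j => adjoint (A j i).

Definition opmx_diag n (A : opmx n) : opmx n :=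
  fun i j x => if i == j then A i i x else 0.

Definition lower_tri n (A : opmx n) : Prop :=
  forall i j : 'I_n, (i < j)%N -> forall x, A i j x = 0.

Definition is_inverse n (A B : opmx n) : Prop :=
  opmx_mul A B = @opmx_id n /\ opmx_mul B A = @opmx_id n.

Definition invertible_lower n (A : opmx n) : Prop :=
  lower_tri A /\ exists B : opmx n, lower_tri B /\ is_inverse A B.

Definition opmx_inv n (A : opmx n) : opmx n :=
  epsilon (inhabits (@opmx_id n)) (fun B : opmx n => is_inverse A B).

End Hilbert.

(* Write A := L1 and C := L2 and argue column by column. If the contributions
   A_ik A_lk^* and C_ik C_lk^* of every column k < j to the two Gram products
   agree, then by triangularity entry (i, j) of L1 L1^* = L2 L2^* reduces to
   A_ij A_jj^* = C_ij C_jj^*. As C_jj is a bounded bijection, C_jj^* is onto: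
   uniform boundedness bounds it below, so its range is closed, and that range
   is dense because C_jj is injective. Hence, with V := A_jj^-1 C_jj, we get
   A_jj^* = V C_jj^*, then C_ij = A_ij V, and V is unitary, so column j
   contributes equally as well. C_ij = A_ij A_jj^-1 C_jj is the claimed identity. *)

From HB Require Import structures.
From mathcomp Require Import all_boot all_order all_algebra.
From mathcomp Require Import boolp classical_sets reals complex.
From mathcomp Require Import ring lra.
From Stdlib Require Import ClassicalEpsilon.
Set Implicit Arguments. Unset Strict Implicit. Unset Printing Implicit Defensive.
Import Order.TTheory GRing.Theory Num.Theory.
Local Open Scope ring_scope.
Local Open Scope complex_scope.

Lemma dependent_choice (T : Type) (P : nat -> T -> T -> Prop) (t0 : T) :
  (forall k t, exists t', P k t t') ->
  exists f : nat -> T, f 0%N = t0 /\ forall k, P k (f k) (f k.+1).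
Proof.
move=> step; have [g gP] := boolp.choice (fun kt : nat * T => step kt.1 kt.2).
by exists (fix f k := if k is k'.+1 then g (k', f k') else t0); split => // k; apply: (gP (k, _)).
Qed.

Lemma inv_succ_small (R : archiFieldType) (e : R) :
  0 < e -> exists K : nat, forall m, (K <= m)%N -> (m%:R + 1)^-1 < e.
Proof.
move=> e_gt0; exists (Num.bound e^-1) => m mK.
have bound_gt := @archi_boundP _ e^-1 ltac:(by rewrite invr_ge0 ltW).
rewrite -(ler_nat R) in mK; have m1_gt0 : 0 < m%:R + 1 :> R by rewrite ltr_wpDl.
rewrite -[X in _ < X]invrK ltf_pV2 ?posrE ?invr_gt0 //; lra.
Qed.

Section OperatorMatrix.
Variables (R : realType) (H : lmodType R[i]) (n : nat).
Implicit Types (M N L : opmx H n).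

Lemma opmx_mul_diagl M N : opmx_mul (opmx_diag M) N = fun i j x => M i i (N i j x).
Proof.
apply: funext => i; apply: funext => j; apply: funext => x.
rewrite /opmx_mul (bigD1 i) //= big1 ?addr0 /opmx_diag ?eqxx // => k.
by rewrite eq_sym => /negbTE ->.
Qed.

Lemma opmx_mul_diagr M N : (forall i k, M i k 0 = 0) ->
  opmx_mul M (opmx_diag N) = fun i j x => M i j (N j j x).
Proof.
move=> M0; apply: funext => i; apply: funext => j; apply: funext => x.
by rewrite /opmx_mul (bigD1 j) //= big1 ?addr0 /opmx_diag ?eqxx // => k /negbTE ->.
Qed.

Lemma opmx_inv_diag M (d : 'I_n -> H -> H) : (forall i, M i i 0 = 0) ->
    (forall i, cancel (d i) (M i i)) -> (forall i, cancel (M i i) (d i)) ->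
  opmx_inv (opmx_diag M) = opmx_diag (fun i _ => d i).
Proof.
move=> M0 dK Kd; pose D := opmx_diag (fun i _ => d i).
have d0 i : d i 0 = 0 by rewrite -(M0 i) Kd.
have D_inv : is_inverse (opmx_diag M) D.
  split; rewrite opmx_mul_diagl; apply: funext => i; apply: funext => j; apply: funext => x.
    by rewrite /D /opmx_diag /opmx_id; case: eqP => _; rewrite ?dK ?M0.
  by rewrite /D /opmx_diag /opmx_id; case: eqP => _; rewrite ?Kd ?d0.
have inv_eq X : opmx_mul (opmx_diag M) X = @opmx_id _ _ n -> X = D.
  move=> MX; apply: funext => i; apply: funext => j; apply: funext => x.
  have := congr1 (fun f => d i (f i j x)) MX; rewrite opmx_mul_diagl /= Kd => ->.
  by rewrite /D /opmx_diag /opmx_id; case: eqP => // _; rewrite d0.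
apply: inv_eq; rewrite /opmx_inv.
by case: (epsilon_spec (inhabits (@opmx_id _ _ n)) (is_inverse (opmx_diag M)) (ex_intro _ D D_inv)).
Qed.

Lemma invertible_lower_diag L : (forall i k, L i k 0 = 0) -> invertible_lower L ->
  forall i, bijective (L i i).
Proof.
move=> L0 [L_lower [B [B_lower [LB BL]]]] i.
(* The entries of [B] need not be additive, so [B i k 0] may be nonzero; still, the
   off-diagonal part of [(B L) i i x] does not depend on [x], which makes [L i i] injective. *)
have split_ii (X Y : opmx H n) x :
    opmx_mul X Y i i x = X i i (Y i i x) + \sum_(k | k != i) X i k (Y k i x).
  by rewrite /opmx_mul (bigD1 i).
have LB_ii : cancel (B i i) (L i i).
  move=> x; have := congr1 (fun f => f i i x) LB.
  rewrite split_ii /opmx_id eqxx big1 ?addr0 // => k k_neq.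
  case: (ltngtP k i) => [k_lt|k_gt|/ord_inj k_eq]; last by rewrite k_eq eqxx in k_neq.
    by rewrite B_lower.
  by rewrite L_lower.
have BL_ii x : B i i (L i i x) + \sum_(k | k != i) B i k (L k i x) = x.
  by have := congr1 (fun f => f i i x) BL; rewrite split_ii /opmx_id eqxx.
have L_inj : injective (L i i).
  move=> x y Lxy; rewrite -(BL_ii x) -(BL_ii y) Lxy; congr (_ + _); apply: eq_bigr => k k_neq.
  case: (ltngtP k i) => [k_lt|k_gt|/ord_inj k_eq]; last by rewrite k_eq eqxx in k_neq.
    by rewrite !L_lower.
  by rewrite !B_lower.
by exists (B i i) => // x; apply: L_inj; rewrite LB_ii.
Qed.

End OperatorMatrix.

Section InnerProduct.
Variables (R : realType) (H : lmodType R[i]) (ip : H -> H -> R[i]).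
Hypothesis ipP : is_inner_product ip.

Lemma ipC x y : ip y x = (ip x y)^*.
Proof. by case: ipP. Qed.

Lemma ip_eq0 x : ip x x = 0 -> x = 0.
Proof. by case: ipP => _ _ _; apply. Qed.

Lemma ip0l z : ip 0 z = 0.
Proof.
case: ipP => ipDZ _ _ _; have := ipDZ 1 0 0 z.
rewrite scaler0 addr0 mul1r => /(congr1 (fun t => t - ip 0 z)).
by rewrite subrr addrK => /esym.
Qed.

Lemma ipZl a x z : ip (a *: x) z = a * ip x z.
Proof. by case: ipP => ipDZ _ _ _; rewrite -[a *: x]addr0 ipDZ ip0l addr0. Qed.

Lemma ipDl x y z : ip (x + y) z = ip x z + ip y z.
Proof. by case: ipP => ipDZ _ _ _; rewrite -[x]scale1r ipDZ mul1r scale1r. Qed.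

Lemma ipNl x z : ip (- x) z = - ip x z.
Proof. by rewrite -scaleN1r ipZl mulN1r. Qed.

Lemma ipBl x y z : ip (x - y) z = ip x z - ip y z.
Proof. by rewrite ipDl ipNl. Qed.

Lemma ip0r z : ip z 0 = 0.
Proof. by rewrite ipC ip0l conjc0. Qed.

Lemma ipZr a x z : ip z (a *: x) = a^* * ip z x.
Proof. by rewrite ipC ipZl rmorphM /= -ipC. Qed.

Lemma ipDr x y z : ip z (x + y) = ip z x + ip z y.
Proof. by rewrite ipC ipDl rmorphD /= -!ipC. Qed.

Lemma ipBr x y z : ip z (x - y) = ip z x - ip z y.
Proof. by rewrite ipC ipBl rmorphB /= -!ipC. Qed.

Lemma ip_injr a b : (forall x, ip x a = ip x b) -> a = b.
Proof. by move=> h; apply/eqP; rewrite -subr_eq0; apply/eqP/ip_eq0; rewrite ipBr h subrr. Qed.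

(* The analysis only uses the real inner product [Re <x, y>], which induces the norm of [H]. *)
Definition rip x y := complex.Re (ip x y).
Definition sqn x := rip x x.

Lemma ripC x y : rip y x = rip x y.
Proof. by rewrite /rip ipC; case: (ip x y). Qed.

Lemma ripDl x y z : rip (x + y) z = rip x z + rip y z.
Proof. by rewrite /rip ipDl; case: (ip x z); case: (ip y z). Qed.

Lemma ripNl x z : rip (- x) z = - rip x z.
Proof. by rewrite /rip ipNl; case: (ip x z). Qed.

Lemma ripBl x y z : rip (x - y) z = rip x z - rip y z.
Proof. by rewrite ripDl ripNl. Qed.

Lemma ripZl (s : R) x z : rip (s%:C *: x) z = s * rip x z.
Proof. by rewrite /rip ipZl; case: (ip x z) => a b /=; simpc. Qed.

Lemma ripDr x y z : rip z (x + y) = rip z x + rip z y.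
Proof. by rewrite ripC ripDl !(ripC z). Qed.

Lemma ripNr x z : rip z (- x) = - rip z x.
Proof. by rewrite ripC ripNl ripC. Qed.

Lemma ripBr x y z : rip z (x - y) = rip z x - rip z y.
Proof. by rewrite ripDr ripNr. Qed.

Lemma ripZr (s : R) x z : rip z (s%:C *: x) = s * rip z x.
Proof. by rewrite ripC ripZl ripC. Qed.

Lemma rip0r z : rip z 0 = 0.
Proof. by rewrite /rip ip0r. Qed.

Lemma ip_sqn x : ip x x = (sqn x)%:C.
Proof.
case: ipP => _ _ ge0 _; move: (ge0 x); rewrite /sqn /rip.
by case: (ip x x) => a b; rewrite lecE /= => /andP[/eqP -> _].
Qed.

Lemma sqn_ge0 x : 0 <= sqn x.
Proof. by case: ipP => _ _ ge0 _; move: (ge0 x); rewrite ip_sqn lecR. Qed.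

Lemma sqn_eq0 x : sqn x = 0 -> x = 0.
Proof. by move=> h; apply: ip_eq0; rewrite ip_sqn h. Qed.

Lemma sqn0 : sqn 0 = 0.
Proof. by rewrite /sqn /rip ip0l. Qed.

Lemma sqnD x y : sqn (x + y) = sqn x + 2 * rip x y + sqn y.
Proof. rewrite /sqn ripDl !ripDr (ripC y x); ring. Qed.

Lemma sqnB x y : sqn (x - y) = sqn x - 2 * rip x y + sqn y.
Proof. rewrite /sqn ripBl !ripBr (ripC y x); ring. Qed.

Lemma sqnZ (s : R) x : sqn (s%:C *: x) = s ^+ 2 * sqn x.
Proof. by rewrite /sqn ripZl ripZr mulrA expr2. Qed.

Lemma parallelogram x y : sqn (x - y) + sqn (x + y) = 2 * sqn x + 2 * sqn y.
Proof. rewrite sqnB sqnD; ring. Qed.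

Lemma cauchy_schwarz x y : rip x y ^+ 2 <= sqn x * sqn y.
Proof.
have [/sqn_eq0 ->|y_neq0] := eqVneq (sqn y) 0; first by rewrite rip0r sqn0 expr0n mulr0.
have y_gt0 : 0 < sqn y by rewrite lt_def y_neq0 sqn_ge0.
have := sqn_ge0 (x - (rip x y / sqn y)%:C *: y).
rewrite sqnB ripZr sqnZ.
have -> : sqn x - 2 * (rip x y / sqn y * rip x y) + (rip x y / sqn y) ^+ 2 * sqn y
   = (sqn x * sqn y - rip x y ^+ 2) / sqn y by field.
by rewrite pmulr_lge0 ?invr_gt0 // subr_ge0.
Qed.

Definition hnorm x := Num.sqrt (sqn x).

Lemma hnorm_ge0 x : 0 <= hnorm x.
Proof. exact: sqrtr_ge0. Qed.

Lemma hnorm_sqr x : hnorm x ^+ 2 = sqn x.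
Proof. by rewrite sqr_sqrtr // sqn_ge0. Qed.

Lemma hnorm_eq0 x : hnorm x = 0 -> x = 0.
Proof. by move=> /eqP; rewrite sqrtr_eq0 => h; apply/sqn_eq0/eqP; rewrite eq_le h sqn_ge0. Qed.

Lemma hnorm0 : hnorm 0 = 0.
Proof. by rewrite /hnorm sqn0 sqrtr0. Qed.

Lemma hnormN x : hnorm (- x) = hnorm x.
Proof. by rewrite /hnorm /sqn ripNl ripNr opprK. Qed.

Lemma hnormZ (s : R) x : hnorm (s%:C *: x) = `|s| * hnorm x.
Proof. by rewrite /hnorm sqnZ sqrtrM ?sqr_ge0 // sqrtr_sqr. Qed.

Lemma hnorm_lt x e : 0 < e -> (hnorm x < e) = (sqn x < e ^+ 2).
Proof. by move=> e_gt0; rewrite -hnorm_sqr ltr_pXn2r // ?nnegrE ?hnorm_ge0 // ltW. Qed.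

Lemma normr_rip_le x y : `|rip x y| <= hnorm x * hnorm y.
Proof.
rewrite -sqrtr_sqr /hnorm -sqrtrM ?sqn_ge0 // ler_sqrt ?cauchy_schwarz //.
by rewrite mulr_ge0 ?sqn_ge0.
Qed.

Lemma hnormD x y : hnorm (x + y) <= hnorm x + hnorm y.
Proof.
rewrite -(ger0_norm (addr_ge0 (hnorm_ge0 x) (hnorm_ge0 y))) -sqrtr_sqr.
rewrite ler_sqrt ?sqr_ge0 // sqnD sqrrD !hnorm_sqr.
by have := normr_rip_le x y; have := ler_norm (rip x y); lra.
Qed.

Lemma hnorm_triangle x y z : hnorm (x - z) <= hnorm (x - y) + hnorm (y - z).
Proof. by have := hnormD (x - y) (y - z); rewrite addrA subrK. Qed.

Lemma hnorm_distC x y : hnorm (x - y) = hnorm (y - x).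
Proof. by rewrite -hnormN opprB. Qed.


Definition hnorm_cvg (u : nat -> H) (l : H) :=
  forall e, 0 < e -> exists K : nat, forall m, (K <= m)%N -> hnorm (u m - l) < e.

Definition hnorm_cauchy (u : nat -> H) := forall e, 0 < e ->
  exists K : nat, forall m k, (K <= m)%N -> (K <= k)%N -> hnorm (u m - u k) < e.

Definition seq_closed (S : H -> Prop) :=
  forall u l, (forall k, S (u k)) -> hnorm_cvg u l -> S l.

Definition real_subspace (S : H -> Prop) :=
  [/\ S 0, forall x y, S x -> S y -> S (x + y) & forall (s : R) x, S x -> S (s%:C *: x)].

Lemma abs_ip_sqn x : `|ip x x| = (sqn x)%:C.
Proof. by rewrite ip_sqn ger0_norm // ler0c sqn_ge0. Qed.

Hypothesis completeP : ip_complete ip.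

Lemma hnorm_complete u : hnorm_cauchy u -> exists l, hnorm_cvg u l.
Proof.
move=> u_cauchy; have [l ul] : exists l, forall e : R, 0 < e ->
    exists K : nat, forall m, (K <= m)%N -> `|ip (u m - l) (u m - l)| < e%:C.
  apply: completeP => e e_gt0.
  have [K hK] : exists K : nat, _ := u_cauchy (Num.sqrt e) ltac:(by rewrite sqrtr_gt0).
  exists K => m k mK kK; rewrite abs_ip_sqn ltcR -[e]sqr_sqrtr ?ltW // -hnorm_lt ?sqrtr_gt0 //.
  exact: hK.
exists l => e e_gt0; have [K hK] := ul _ (exprn_gt0 2 e_gt0).
by exists K => m mK; rewrite hnorm_lt // -ltcR -abs_ip_sqn hK.
Qed.

Section Projection.
Variables (S : H -> Prop) (z : H) (d : R).
Hypothesis S_subspace : real_subspace S.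
Hypothesis d_lb : forall u, S u -> d <= sqn (z - u).

Lemma rip_sqr_le_excess s t : S s -> S t -> rip (z - s) t ^+ 2 <= (sqn (z - s) - d) * sqn t.
Proof.
case: S_subspace => _ SD SZ Ss St.
have [/sqn_eq0 ->|t_neq0] := eqVneq (sqn t) 0; first by rewrite rip0r sqn0 expr0n mulr0.
set r := rip (z - s) t.
have := d_lb (SD _ _ Ss (SZ (r / sqn t) _ St)).
rewrite opprD addrA sqnB ripZr sqnZ.
have -> : sqn (z - s) - 2 * (r / sqn t * r) + (r / sqn t) ^+ 2 * sqn t
    = sqn (z - s) - r ^+ 2 / sqn t by field.
by rewrite -ler_pdivrMr ?lt_def ?t_neq0 ?sqn_ge0 //; lra.
Qed.

Lemma sqnB_le_excess a b : S a -> S b ->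
  sqn (a - b) <= 2 * (sqn (z - a) - d) + 2 * (sqn (z - b) - d).
Proof.
case: S_subspace => _ SD SZ Sa Sb; set h := (2^-1 : R)%:C.
have := d_lb (SZ 2^-1 _ (SD _ _ Sb Sa)); set w := z - h *: (b + a) => d_le.
have halfK v : h *: v + h *: v = v.
  by rewrite -scalerDl -rmorphD /= (_ : 2^-1 + 2^-1 = 1 :> R) ?scale1r //; field.
have := parallelogram (z - b) (z - a).
have -> : z - b - (z - a) = a - b by rewrite opprB addrC addrA subrK.
have -> : z - b + (z - a) = w + w by rewrite /w [LHS]addrACA [RHS]addrACA -!opprD halfK.
by move: d_le; rewrite (sqnD w w) /sqn; lra.
Qed.

Section MinimizingSequence.
Variable s : nat -> H.
Hypothesis Ss : forall k, S (s k).
Hypothesis s_min : forall k, sqn (z - s k) - d < (k%:R + 1)^-1.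

Lemma minimizing_cauchy : hnorm_cauchy s.
Proof.
move=> e e_gt0; have [K hK] := @inv_succ_small _ (e ^+ 2 / 4) ltac:(by rewrite divr_gt0 ?exprn_gt0).
exists K => m k mK kK; rewrite hnorm_lt //; have := sqnB_le_excess (Ss m) (Ss k).
by have := hK m mK; have := hK k kK; have := s_min m; have := s_min k; lra.
Qed.

Lemma minimizing_limit_orthogonal l t : hnorm_cvg s l -> S t -> rip (z - l) t = 0.
Proof.
move=> sl St; apply/eqP; rewrite -normr_le0; apply/ler_addgt0Pr => e e_gt0; rewrite add0r.
pose c := hnorm t + 1; have c_gt0 : 0 < c by rewrite ltr_wpDl ?hnorm_ge0.
pose del := e / (2 * c); have del_gt0 : 0 < del by rewrite divr_gt0 ?mulr_gt0.
have [K1 hK1] := inv_succ_small (exprn_gt0 2 del_gt0).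
have [K2 hK2] := sl del del_gt0.
pose k := maxn K1 K2; have t_le_c : hnorm t <= c by rewrite lerDl.
have -> : z - l = (z - s k) + (s k - l) by rewrite addrA subrK.
have excess_le : `|rip (z - s k) t| <= del * c.
  rewrite -sqrtr_sqr -(ger0_norm (ltW (mulr_gt0 del_gt0 c_gt0))) -sqrtr_sqr ler_sqrt ?sqr_ge0 //.
  apply: le_trans (rip_sqr_le_excess (Ss k) St) _.
  rewrite exprMn; apply: ler_pM; rewrite ?sqn_ge0 ?subr_ge0 ?d_lb //.
    exact: ltW (lt_trans (s_min k) (hK1 k (leq_maxl _ _))).
  by rewrite -hnorm_sqr !expr2 ler_pM ?hnorm_ge0.
have dist_le : `|rip (s k - l) t| <= del * c.
  apply: le_trans (normr_rip_le _ _) _; apply: ler_pM; rewrite ?hnorm_ge0 //.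
  exact: ltW (hK2 k (leq_maxr _ _)).
rewrite ripDl; apply: le_trans (ler_normD _ _) _; apply: le_trans (lerD excess_le dist_le) _.
by rewrite (_ : del * c + del * c = e) // /del; field; rewrite gt_eqF.
Qed.

End MinimizingSequence.

End Projection.

Theorem projection S z : real_subspace S -> seq_closed S ->
  exists2 s, S s & forall t, S t -> rip (z - s) t = 0.
Proof.
move=> S_sub S_closed; have [S0 _ _] := S_sub.
pose E r := exists2 u, S u & sqn (z - u) = r.
have E_inf : has_inf E.
  by split; [exists (sqn (z - 0)), 0 | exists 0 => _ [u _ <-]; apply: sqn_ge0].
have d_lb u : S u -> inf E <= sqn (z - u) by move=> Su; apply: (ge_inf E_inf.2); exists u.
have [s sP] : {s : nat -> H & forall k, S (s k) /\ sqn (z - s k) - inf E < (k%:R + 1)^-1}.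
  apply: (@boolp.choice _ _ (fun k u => S u /\ sqn (z - u) - inf E < (k%:R + 1)^-1)) => k.
  have k_gt0 : 0 < (k%:R + 1)^-1 :> R by rewrite invr_gt0 ltr_wpDl.
  have [_ [u Su <-]] := inf_adherent k_gt0 E_inf.
  by exists u; split => //; rewrite ltrBlDl.
have Ss k := (sP k).1; have s_min k := (sP k).2.
have [l sl] := hnorm_complete (minimizing_cauchy S_sub d_lb Ss s_min).
exists l => [|t]; first exact: S_closed sl.
exact: (minimizing_limit_orthogonal S_sub d_lb Ss s_min sl).
Qed.

Section BoundedOp.
Variable A : H -> H.
Hypothesis A_bounded : bounded_op ip A.

Lemma bounded_opD x y : A (x + y) = A x + A y.
Proof. by case: A_bounded => lin _; have := lin 1 x y; rewrite !scale1r. Qed.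

Lemma bounded_op0 : A 0 = 0.
Proof.
have := bounded_opD 0 0; rewrite addr0 => /(congr1 (fun t => t - A 0)).
by rewrite subrr addrK => /esym.
Qed.

Lemma bounded_opZ a x : A (a *: x) = a *: A x.
Proof. by case: A_bounded => lin _; rewrite -[a *: x]addr0 lin bounded_op0 addr0. Qed.

Lemma bounded_opN x : A (- x) = - A x.
Proof. by rewrite -scaleN1r bounded_opZ scaleN1r. Qed.

Lemma bounded_opB x y : A (x - y) = A x - A y.
Proof. by rewrite bounded_opD bounded_opN. Qed.

Lemma bounded_op_norm : exists2 M, 0 <= M & forall x, hnorm (A x) <= M * hnorm x.
Proof.
case: A_bounded => _ [M hM]; exists (Num.sqrt `|M|) => [|x]; first exact: sqrtr_ge0.
have := hM x; rewrite !abs_ip_sqn -rmorphM lecR => le_M.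
rewrite /hnorm -sqrtrM // ler_sqrt ?mulr_ge0 ?sqn_ge0 //.
by apply: le_trans le_M _; rewrite ler_wpM2r ?sqn_ge0 ?ler_norm.
Qed.

End BoundedOp.

Lemma bounded_op_of_norm (B : H -> H) M :
  (forall a x y, B (a *: x + y) = a *: B x + B y) -> (forall x, hnorm (B x) <= M * hnorm x) ->
  bounded_op ip B.
Proof.
move=> lin le_M; split=> //; exists (M ^+ 2) => x; rewrite !abs_ip_sqn -rmorphM lecR.
rewrite -!hnorm_sqr -exprMn; apply: lerXn2r; rewrite ?nnegrE ?hnorm_ge0 ?le_M //.
by apply: le_trans (le_M x); apply: hnorm_ge0.
Qed.

Lemma kernel_closed (g : H -> R) K :
  (forall x y, g (x - y) = g x - g y) -> (forall x, `|g x| <= K * hnorm x) ->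
  seq_closed (fun x => g x = 0).
Proof.
move=> gB le_K u l gu ul; apply/eqP; rewrite -normr_le0; apply/ler_addgt0Pr => e e_gt0.
rewrite add0r; have [k hk] := ul (e / (`|K| + 1)) ltac:(by rewrite divr_gt0 ?ltr_wpDl).
have := le_K (u k - l); rewrite gB gu sub0r normrN => le_gl.
apply: le_trans le_gl _; apply: le_trans (_ : `|K| * hnorm (u k - l) <= _).
  by rewrite ler_wpM2r ?hnorm_ge0 ?ler_norm.
have {}hk := ltW (hk k (leqnn k)); rewrite ler_pdivlMr ?ltr_wpDl // in hk.
by apply: le_trans hk; rewrite mulrC ler_wpM2l ?hnorm_ge0 ?lerDl.
Qed.

Lemma riesz_real (g : H -> R) K :
  (forall x y, g (x + y) = g x + g y) -> (forall (s : R) x, g (s%:C *: x) = s * g x) ->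
  (forall x, `|g x| <= K * hnorm x) -> exists v, forall x, g x = rip x v.
Proof.
move=> gD gZ le_K.
have gN x : g (- x) = - g x.
  rewrite -scaleN1r (_ : -1 = (-1 : R)%:C) ?gZ ?mulN1r //.
  by apply/eqP; rewrite eq_complex /= oppr0 !eqxx.
have g0 : g 0 = 0 by rewrite -[0](scale0r 0) -[0 : R[i]]/(0%:C) gZ mul0r.
have ker_sub : real_subspace (fun x => g x = 0).
  by split=> // [x y|s x]; rewrite ?gD ?gZ => -> //; rewrite (add0r, mulr0).
have ker_closed : seq_closed (fun x => g x = 0).
  by apply: (kernel_closed _ le_K) => x y; rewrite gD gN.
have [g_eq0|/existsNP[u gu_neq0]] := pselect (forall x, g x = 0).
  by exists 0 => x; rewrite g_eq0 rip0r.
have [s gs wP] := projection u ker_sub ker_closed; set w := u - s in wP.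
have gw : g w = g u by rewrite gD gN gs oppr0 addr0.
have sqn_w : sqn w != 0.
  by apply: contra_notN gu_neq0 => /eqP/sqn_eq0 w0; rewrite -gw w0.
have gw_neq0 : g w != 0 by rewrite gw; apply/eqP.
(* [w] is orthogonal to the kernel of [g], which contains [x - (g x / g w) w]. *)
exists ((g w / sqn w)%:C *: w) => x; rewrite ripZr.
have := wP (x - (g x / g w)%:C *: w); rewrite ripC ripBl ripZl gD gN gZ divfK ?subrr //.
move=> /(_ erefl) /eqP; rewrite subr_eq0 => /eqP ->; rewrite -/(sqn w).
by field; apply/andP.
Qed.

Lemma ip_eq_of_rip a b c d : (forall s : R[i], rip (s *: a) b = rip (s *: c) d) -> ip a b = ip c d.
Proof.
move=> h; have := h 1; have := h 'i; rewrite /rip !ipZl !mul1r.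
by case: (ip a b) => ? ?; case: (ip c d) => ? ? /=; rewrite !mul0r !mul1r !sub0r => /oppr_inj -> ->.
Qed.

Section Adjoint.
Variable A : H -> H.
Hypothesis A_bounded : bounded_op ip A.

Lemma adjoint_exists y : exists v, forall x, ip (A x) y = ip x v.
Proof.
have [M M_ge0 le_M] := bounded_op_norm A_bounded.
have [v hv] : exists v, forall x, rip (A x) y = rip x v.
  apply: (@riesz_real (fun x => rip (A x) y) (M * hnorm y)) => [x x'|s x|x];
    rewrite ?bounded_opD ?bounded_opZ ?ripDl ?ripZl //.
  apply: le_trans (normr_rip_le _ _) _; rewrite mulrAC ler_wpM2r ?hnorm_ge0 //.
exists v => x; apply: ip_eq_of_rip => s; rewrite -bounded_opZ //; exact: hv.
Qed.

Lemma adjointP x y : ip (A x) y = ip x (adjoint ip A y).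
Proof.
move: x y; apply: (epsilon_spec _ (fun B => forall x y, ip (A x) y = ip x (B y))).
by have [B BP] := boolp.choice adjoint_exists; exists B => x y; apply: BP.
Qed.

Lemma rip_adjoint x y : rip (A x) y = rip x (adjoint ip A y).
Proof. by rewrite /rip adjointP. Qed.

Lemma adjoint_bounded : bounded_op ip (adjoint ip A).
Proof.
have [M M_ge0 le_M] := bounded_op_norm A_bounded.
apply: (@bounded_op_of_norm _ M) => [a y y'|y].
  by apply: ip_injr => x; rewrite -adjointP !(ipDr, ipZr) -!adjointP.
set z := adjoint ip A y.
have [z0|z_neq0] := eqVneq (hnorm z) 0; first by rewrite z0 mulr_ge0 ?hnorm_ge0.
have le_z : hnorm z * hnorm z <= hnorm z * (M * hnorm y).
  rewrite -expr2 hnorm_sqr /sqn -rip_adjoint; apply: le_trans (ler_norm _) _.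
  by apply: le_trans (normr_rip_le _ _) _; rewrite mulrA ler_wpM2r ?hnorm_ge0 // mulrC.
by rewrite -(ler_pM2l (x := hnorm z)) // lt_def z_neq0 hnorm_ge0.
Qed.

Lemma adjoint_zero : (forall x, A x = 0) -> forall y, adjoint ip A y = 0.
Proof. by move=> A0 y; apply: ip_injr => x; rewrite -adjointP A0 ip0l ip0r. Qed.

End Adjoint.

Lemma nested_balls (c : nat -> H) (r : nat -> R) :
  (forall k, 0 <= r k) -> (forall e, 0 < e -> exists k, r k < e) ->
  (forall k, hnorm (c k.+1 - c k) + r k.+1 <= r k) ->
  exists l, forall k, hnorm (l - c k) <= r k.
Proof.
move=> r_ge0 r_small nested.
have nest k j : hnorm (c (k + j)%N - c k) + r (k + j)%N <= r k.
  elim: j => [|j IHj]; first by rewrite addn0 subrr hnorm0 add0r.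
  rewrite addnS; have := nested (k + j)%N.
  by have := hnorm_triangle (c (k + j).+1) (c (k + j)%N) (c k); lra.
have nest_le k m : (k <= m)%N -> hnorm (c m - c k) <= r k - r m.
  by move=> /subnKC <-; have := nest k (m - k)%N; lra.
have [l cl] : exists l, hnorm_cvg c l.
  apply: hnorm_complete => e e_gt0; have [K rK] := r_small (e / 2) ltac:(lra).
  exists K => m k mK kK; have := nest_le _ _ mK; have := nest_le _ _ kK.
  have := hnorm_triangle (c m) (c K) (c k); rewrite (hnorm_distC (c K)).
  by have := r_ge0 m; have := r_ge0 k; lra.
exists l => k; apply/ler_addgt0Pr => e e_gt0; have [K hK] := cl e e_gt0.
have := hK _ (leq_maxl K k); rewrite (hnorm_distC (c _) l); have := nest_le _ _ (leq_maxr K k).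
have := hnorm_triangle l (c (maxn K k)) (c k).
by have := r_ge0 (maxn K k); lra.
Qed.

Section UniformBoundedness.
Variable W : H -> Prop.

Lemma bound_on_ball (m : R) x0 r : 0 < r ->
    (forall x, hnorm (x - x0) < r -> forall w, W w -> `|rip x w| <= m) ->
  forall w, W w -> hnorm w <= 4 * m / r.
Proof.
move=> r_gt0 ball_le w Ww; have m_ge0 : 0 <= m.
  by apply: le_trans (ball_le x0 _ w Ww); rewrite ?subrr ?hnorm0.
have [w0|w_neq0] := eqVneq (hnorm w) 0.
  by rewrite w0; apply: divr_ge0; [apply: mulr_ge0 | apply: ltW].
have w_gt0 : 0 < hnorm w by rewrite lt_def w_neq0 hnorm_ge0.
pose s := r / (2 * hnorm w).
have s_ge0 : 0 <= s by rewrite divr_ge0 ?mulr_ge0 ?ltW.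
have s_w : s * hnorm w = r / 2 by rewrite /s; field; rewrite w_neq0.
have s_dist : hnorm (x0 + s%:C *: w - x0) < r.
  by rewrite addrAC subrr add0r hnormZ ger0_norm // s_w; lra.
have := ball_le _ s_dist w Ww; have := ball_le x0 _ w Ww; rewrite subrr hnorm0 => /(_ r_gt0).
rewrite ripDl ripZl -/(sqn w) -hnorm_sqr expr2 mulrA s_w !ler_norml => le0 le1.
by rewrite ler_pdivlMr //; lra.
Qed.

Lemma rip_gt_near (m : R) x w rho : m < `|rip x w| -> 0 < rho ->
  exists r, [/\ 0 < r, r <= rho & forall y, hnorm (y - x) <= r -> m < `|rip y w|].
Proof.
move=> m_lt rho_gt0; pose d := (`|rip x w| - m) / (2 * (hnorm w + 1)).
have w1_gt0 : 0 < hnorm w + 1 by rewrite ltr_wpDl ?hnorm_ge0.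
have d_gt0 : 0 < d by rewrite divr_gt0 ?subr_gt0 ?mulr_gt0.
have d_w : d * (hnorm w + 1) = (`|rip x w| - m) / 2 by rewrite /d; field; rewrite gt_eqF.
exists (Num.min rho d); split; rewrite ?lt_min ?rho_gt0 ?d_gt0 ?ge_min ?lexx // => y.
rewrite le_min => /andP[_ le_d].
have le_yx : hnorm (y - x) * hnorm w <= d * (hnorm w + 1).
  by rewrite ler_pM ?hnorm_ge0 ?lerDl.
have := normr_rip_le (y - x) w; have := ler_normB (rip y w) (rip (y - x) w).
rewrite -ripBl opprB addrC subrK; lra.
Qed.

Theorem uniform_boundedness :
  (forall x, exists m, forall w, W w -> `|rip x w| <= m) -> exists M, forall w, W w -> hnorm w <= M.
Proof.
move=> pointwise.
have [[m [x0 [r [r_gt0 ball_le]]]]|unbounded] := pselect (exists m x0 r,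
    0 < r /\ forall x, hnorm (x - x0) < r -> forall w, W w -> `|rip x w| <= m).
  by exists (4 * m / r); apply: bound_on_ball ball_le.
(* Baire's argument: every ball contains a smaller one on which some [w] in [W] exceeds [k];
   the centres of the nested balls converge to a point at which [W] is unbounded. *)
have step k (p : H * R) : exists p' : H * R, 0 < p.2 -> [/\ 0 < p'.2, p'.2 <= (k%:R + 1)^-1,
    hnorm (p'.1 - p.1) + p'.2 <= p.2
  & exists2 w, W w & forall y, hnorm (y - p'.1) <= p'.2 -> k%:R < `|rip y w|].
  have [p_gt0|_] := ltP 0 p.2; last by exists p.
  have : ~ forall x, hnorm (x - p.1) < p.2 / 2 -> forall w, W w -> `|rip x w| <= k%:R.
    by move=> ball_le; apply: unbounded; exists k%:R, p.1, (p.2 / 2); split => //; lra.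
  move=> /existsNP[x /not_implyP[x_near /existsNP[w /not_implyP[Ww /negP]]]].
  rewrite -ltNge => k_lt.
  have [|r [r_gt0 r_le near]] := rip_gt_near (rho := Num.min (p.2 / 2) (k%:R + 1)^-1) k_lt.
    by rewrite lt_min invr_gt0 ltr_wpDl //; lra.
  exists (x, r) => _ /=; move: r_le; rewrite le_min => /andP[r_le1 r_le2].
  by split => //; [lra | exists w].
have [f [f0 fP]] := dependent_choice (0, 1) step.
have f_gt0 k : 0 < (f k).2 by elim: k => [|k IHk]; [rewrite f0 /=; lra | case: (fP k IHk)].
have [l lP] : exists l, forall k, hnorm (l - (f k).1) <= (f k).2.
  apply: nested_balls => [k|e e_gt0|k]; [exact: ltW | | by case: (fP k)].
  have [K hK] := inv_succ_small e_gt0; exists K.+1; case: (fP K) => // _ le_K _ _.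
  by apply: le_lt_trans le_K (hK K (leqnn K)).
have [m mP] := pointwise l; have [_ _ _ [w Ww near]] := fP (Num.bound m) (f_gt0 _).
have := near l (lP _); have := mP w Ww.
by have := archi_boundP (le_trans (normr_ge0 _) (mP w Ww)); lra.
Qed.

End UniformBoundedness.

Lemma range_closed_of_bounded_below (T : H -> H) K : bounded_op ip T -> 0 <= K ->
  (forall w, hnorm w <= K * hnorm (T w)) -> seq_closed (fun v => exists y, T y = v).
Proof.
move=> T_bounded K_ge0 le_K u l u_range ul.
have [M M_ge0 le_M] := bounded_op_norm T_bounded.
have [y yP] := boolp.choice u_range.
have [y' yy'] : exists y', hnorm_cvg y y'.
  apply: hnorm_complete => e e_gt0.
  have [N hN] := ul (e / (2 * (K + 1))) ltac:(by rewrite divr_gt0 ?mulr_gt0 ?ltr_wpDl).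
  exists N => m k mN kN; apply: le_lt_trans (le_K _) _.
  rewrite bounded_opB // !yP; have := hnorm_triangle (u m) l (u k); rewrite (hnorm_distC l).
  have := hN m mN; have := hN k kN; set d := e / _ => le_m le_k le_tr.
  have d_K : d * (2 * (K + 1)) = e by rewrite /d divfK // mulf_neq0 // gt_eqF // ltr_wpDl.
  have : K * hnorm (u m - u k) <= K * (2 * d) by rewrite ler_wpM2l //; lra.
  by have := hnorm_ge0 (u m - u k); nra.
exists y'; apply/eqP; rewrite -subr_eq0; apply/eqP/hnorm_eq0/eqP.
rewrite eq_le hnorm_ge0 andbT; apply/ler_addgt0Pr => e e_gt0; rewrite add0r.
have [N1 hN1] := ul (e / 2) ltac:(lra).
have [N2 hN2] := yy' (e / (2 * (M + 1))) ltac:(by rewrite divr_gt0 ?mulr_gt0 ?ltr_wpDl).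
pose k := maxn N1 N2; have := hN1 k (leq_maxl _ _).
have := hN2 k (leq_maxr _ _); have := le_M (y k - y'); rewrite bounded_opB // yP.
have := hnorm_triangle (T y') (u k) l; rewrite (hnorm_distC (T y') (u k)).
set d := e / (2 * _) => le_tr le_Mk le_yk le_uk.
have d_M : d * (2 * (M + 1)) = e by rewrite /d divfK // mulf_neq0 // gt_eqF // ltr_wpDl.
have : M * hnorm (y k - y') <= M * d by rewrite ler_wpM2l // ltW.
by have := hnorm_ge0 (y k - y'); nra.
Qed.

Section BijectiveOp.
Variable C : H -> H.
Hypothesis C_bounded : bounded_op ip C.
Hypothesis C_bij : bijective C.
Local Notation Cs := (adjoint ip C).
Let Cs_bounded : bounded_op ip Cs := adjoint_bounded C_bounded.

Lemma adjoint_eq0 w : Cs w = 0 -> w = 0.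
Proof.
case: C_bij => Cinv _ CinvK Cw0; apply: ip_eq0.
by rewrite -{1}(CinvK w) adjointP // Cw0 ip0r.
Qed.

Lemma adjoint_bounded_below : exists2 K, 0 <= K & forall w, hnorm w <= K * hnorm (Cs w).
Proof.
case: C_bij => Cinv _ CinvK.
have [M le_M] : exists M, forall w, hnorm (Cs w) <= 1 -> hnorm w <= M.
  apply: uniform_boundedness => x; exists (hnorm (Cinv x)) => w le1.
  rewrite -{1}(CinvK x) rip_adjoint //; apply: le_trans (normr_rip_le _ _) _.
  by apply: ler_piMr; rewrite ?hnorm_ge0.
have M_ge0 : 0 <= M by apply: le_trans (le_M 0 _); rewrite ?hnorm_ge0 // bounded_op0 // hnorm0.
exists M => // w; have [Cw0|Cw_neq0] := eqVneq (hnorm (Cs w)) 0.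
  by rewrite Cw0 mulr0 (adjoint_eq0 (hnorm_eq0 Cw0)) hnorm0.
have Cw_gt0 : 0 < hnorm (Cs w) by rewrite lt_def Cw_neq0 hnorm_ge0.
have := le_M ((hnorm (Cs w))^-1%:C *: w).
rewrite bounded_opZ // !hnormZ ger0_norm ?invr_ge0 ?hnorm_ge0 // mulVf //.
by move=> /(_ (lexx _)); rewrite ler_pdivrMl // mulrC.
Qed.

Theorem adjoint_surjective z : exists y, Cs y = z.
Proof.
have [K K_ge0 le_K] := adjoint_bounded_below.
have range_sub : real_subspace (fun v => exists y, Cs y = v).
  split; first by exists 0; rewrite bounded_op0.
    by move=> _ _ [y <-] [y' <-]; exists (y + y'); rewrite bounded_opD.
  by move=> s _ [y <-]; exists (s%:C *: y); rewrite bounded_opZ.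
have range_closed := range_closed_of_bounded_below Cs_bounded K_ge0 le_K.
have [_ [y <-] perp] := projection z range_sub range_closed.
exists y; apply/eqP; rewrite eq_sym -subr_eq0; apply/eqP.
have C_inj := bij_inj C_bij.
apply: C_inj; rewrite bounded_op0 //; apply: sqn_eq0.
by rewrite /sqn rip_adjoint // perp //; exists (C (z - Cs y)).
Qed.

End BijectiveOp.

Section UnitaryFactor.
Variables P Q a : H -> H.
Hypotheses (P_bounded : bounded_op ip P) (Q_bounded : bounded_op ip Q) (Q_bij : bijective Q).
Hypotheses (aK : cancel a P) (Ka : cancel P a).
Hypothesis PQ : forall y, P (adjoint ip P y) = Q (adjoint ip Q y).

Lemma adjoint_factor y : adjoint ip P y = a (Q (adjoint ip Q y)).
Proof. by rewrite -PQ Ka. Qed.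

Lemma factor_isometry u z : ip (a (Q u)) (a (Q z)) = ip u z.
Proof.
have [y <-] := adjoint_surjective Q_bounded Q_bij z.
by rewrite -adjoint_factor -adjointP // aK adjointP.
Qed.

Lemma factor_right (F G : H -> H) : (forall y, F (adjoint ip P y) = G (adjoint ip Q y)) ->
  forall z, G z = F (a (Q z)).
Proof.
by move=> FG z; have [y <-] := adjoint_surjective Q_bounded Q_bij z; rewrite -adjoint_factor FG.
Qed.

Lemma factor_adjoint (F G : H -> H) : bounded_op ip F -> bounded_op ip G ->
  (forall z, G z = F (a (Q z))) -> forall x, a (Q (adjoint ip G x)) = adjoint ip F x.
Proof.
move=> F_bounded G_bounded GF x; apply: ip_injr => u; case: Q_bij => Qinv QK QinvK.
have -> : u = a (Q (Qinv (P u))) by rewrite QinvK Ka.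
by rewrite factor_isometry -!adjointP // GF.
Qed.

End UnitaryFactor.

Section LowerColumns.
Variables (n : nat) (A C : opmx H n) (d : 'I_n -> H -> H).
Hypothesis A_bounded : forall i j, bounded_op ip (A i j).
Hypothesis C_bounded : forall i j, bounded_op ip (C i j).
Hypotheses (A_lower : lower_tri A) (C_lower : lower_tri C).
Hypotheses (dK : forall i, cancel (d i) (A i i)) (Kd : forall i, cancel (A i i) (d i)).
Hypothesis C_diag_bij : forall i, bijective (C i i).
Hypothesis AC : opmx_mul A (opmx_adj ip A) = opmx_mul C (opmx_adj ip C).

Definition same_gram_column (k : 'I_n) :=
  forall i l x, A i k (adjoint ip (A l k) x) = C i k (adjoint ip (C l k) x).

Lemma gram_entry_eq (j : 'I_n) : (forall k : 'I_n, (k < j)%N -> same_gram_column k) ->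
  forall i x, A i j (adjoint ip (A j j) x) = C i j (adjoint ip (C j j) x).
Proof.
move=> prev i x; have := congr1 (fun f => f i j x) AC.
rewrite /opmx_mul /opmx_adj (bigD1 j) //= [in RHS](bigD1 j) //=.
rewrite (eq_bigr (fun k => C i k (adjoint ip (C j k) x))) => [/addIr //|k k_neq].
case: (ltngtP k j) => [k_lt|k_gt|/ord_inj k_eq]; last by rewrite k_eq eqxx in k_neq.
  exact: prev.
rewrite !adjoint_zero ?bounded_op0 //; by [apply: A_lower | apply: C_lower].
Qed.

Lemma lower_columns_factor (j : 'I_n) :
  same_gram_column j /\ forall i z, C i j z = A i j (d j (C j j z)).
Proof.
suff : forall m (j : 'I_n), (j < m)%N ->
    same_gram_column j /\ forall i z, C i j z = A i j (d j (C j j z)).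
  by apply; apply: ltnSn.
elim=> [//|m IHm] {}j j_lt.
have col := gram_entry_eq (fun k k_lt => (IHm k (leq_trans k_lt j_lt)).1).
have C_fact i z : C i j z = A i j (d j (C j j z)).
  exact (factor_right (C_bounded j j) (C_diag_bij j) (Kd j) (col j) (col i) z).
split=> // i l x; rewrite C_fact; congr (A i j _).
by rewrite (factor_adjoint (A_bounded j j) (C_bounded j j) (C_diag_bij j) (dK j) (Kd j) (col j)
  (A_bounded l j) (C_bounded l j) (C_fact l)).
Qed.

End LowerColumns.

End InnerProduct.

Local Close Scope complex_scope.
Unset Implicit Arguments.

Theorem lemma4 (R : realType) (H : lmodType R[i]) (ip : H -> H -> R[i])
  (hH : is_hilbert ip) (n : nat) (L1 L2 : opmx H n)
  (hb1 : forall i j, bounded_op ip (L1 i j))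
  (hb2 : forall i j, bounded_op ip (L2 i j))
  (hL1 : invertible_lower L1) (hL2 : invertible_lower L2)
  (heq : opmx_mul L1 (opmx_adj ip L1) = opmx_mul L2 (opmx_adj ip L2)) :
  L2 = opmx_mul (opmx_mul L1 (opmx_inv (opmx_diag L1))) (opmx_diag L2).
Proof.
case: hH => ipP completeP.
have L1_0 i k : L1 i k 0 = 0 by apply: bounded_op0.
have L2_0 i k : L2 i k 0 = 0 by apply: bounded_op0.
have L1_diag_inv i : exists g, cancel g (L1 i i) /\ cancel (L1 i i) g.
  by case: (invertible_lower_diag L1_0 hL1 i) => g gK Kg; exists g.
have [d dP] := boolp.choice L1_diag_inv.
have dK i := (dP i).1; have Kd i := (dP i).2.
have L2_col j i x := (lower_columns_factor ipP completeP hb1 hb2 hL1.1 hL2.1 dK Kd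
  (invertible_lower_diag L2_0 hL2) heq j).2 i x.
rewrite (opmx_inv_diag (fun i => L1_0 i i) dK Kd) !opmx_mul_diagr //= => [|i k].
  by apply: funext => i; apply: funext => j; apply: funext => x; apply: L2_col.
by rewrite -{1}(L1_0 k k) Kd.
Qed.
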